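(* Let $G$ be a finitely generated torsion-free nilpotent group and suppose the decomposition $\overline{G}=R_1\times R_2$ into rational subgroups matches the decomposition $G=G_1\times G_2$. Let $X_i=R_iZ(\overline{G})\cap G$. If $H_1,H_2$ are subgroups of $G$ such that $X_i=H_iZ(G)$ for $i=1,2$ and $Z(G)=Z(H_1)\times Z(H_2)$ (internal direct product), then $G=H_1\times H_2$.
   Context: $\overline{G}$ is the rational closure of $G$ (torsion-free nilpotent, containing $G$, uniquely divisible, each element has a positive power in $G$); for $H\le G$, $\overline{H}$ is the set of elements of $\overline{G}$ having a positive power in $H$. A subgroup is rational if closed under taking all $n$-th roots. A decomposition $\overline{G}=R_1\times R_2$ matches $G=G_1\times G_2$ if $\overline{G_i}\,Z(\overline{G})=R_i\,Z(\overline{G})$ for $i=1,2$. *)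

From Stdlib Require Import List Arith.

Record group := Group {
  carrier :> Type;
  gmul : carrier -> carrier -> carrier;
  ginv : carrier -> carrier;
  gone : carrier;
  gmulA : forall x y z, gmul x (gmul y z) = gmul (gmul x y) z;
  gmul1l : forall x, gmul gone x = x;
  gmul1r : forall x, gmul x gone = x;
  gmulVl : forall x, gmul (ginv x) x = gone;
  gmulVr : forall x, gmul x (ginv x) = gone
}.

Arguments gmul {g} _ _.
Arguments ginv {g} _.
Arguments gone {g}.

Section GroupDefs.
Variable T : group.

Definition gset := T -> Prop.

Definition full : gset := fun _ => True.
Definition trivial : gset := fun x => x = gone.

Definition set_eq (A B : gset) : Prop := forall x, A x <-> B x.
Definition subset (A B : gset) : Prop := forall x, A x -> B x.
Definition setI (A B : gset) : gset := fun x => A x /\ B x.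

Definition setM (A B : gset) : gset :=
  fun x => exists a b, A a /\ B b /\ x = gmul a b.

Definition subgroup (S : gset) : Prop :=
  S gone /\ (forall x y, S x -> S y -> S (gmul x y)) /\
  (forall x, S x -> S (ginv x)).

Definition gen (S : gset) : gset :=
  fun x => forall K, subgroup K -> subset S K -> K x.

Fixpoint gpow (x : T) (n : nat) : T :=
  match n with O => gone | S m => gmul x (gpow x m) end.

Definition commg (x y : T) : T := gmul (gmul (ginv x) (ginv y)) (gmul x y).

Definition commgroup (A B : gset) : gset :=
  gen (fun x => exists a b, A a /\ B b /\ x = commg a b).

(* lower central series: gamma_1 G = G, gamma_{i+1} G = [gamma_i G, G] *)
Fixpoint lcs (G : gset) (n : nat) : gset :=
  match n with O => G | S m => commgroup (lcs G m) G end.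

Definition nilpotent (G : gset) : Prop :=
  exists c, subset (lcs G c) trivial.

Definition torsion_free (G : gset) : Prop :=
  forall x n, G x -> 0 < n -> gpow x n = gone -> x = gone.

Definition finitely_generated (G : gset) : Prop :=
  exists l : list T, (forall x, In x l -> G x) /\
                     set_eq G (gen (fun x => In x l)).

Definition center (H : gset) : gset :=
  fun x => H x /\ forall y, H y -> gmul x y = gmul y x.

Definition dprod (G H1 H2 : gset) : Prop :=
  subgroup H1 /\ subgroup H2 /\
  (forall x y, H1 x -> H2 y -> gmul x y = gmul y x) /\
  set_eq (setI H1 H2) trivial /\
  set_eq G (setM H1 H2).

(* The whole group T is a rational closure of its subgroup G:
   T is torsion-free nilpotent, contains G, is uniquely divisible,
   and every element of T has a positive power in G. *)
Definition rational_closure_of (G : gset) : Prop :=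
  subgroup G /\ torsion_free full /\ nilpotent full /\
  (forall x n, 0 < n -> exists y, gpow y n = x /\
       forall z, gpow z n = x -> z = y) /\
  (forall x, exists n, 0 < n /\ G (gpow x n)).

Definition rclosure (H : gset) : gset :=
  fun x => exists n, 0 < n /\ H (gpow x n).

Definition rational (R : gset) : Prop :=
  subgroup R /\ forall x n, 0 < n -> R (gpow x n) -> R x.

Definition matches (R1 R2 G1 G2 : gset) : Prop :=
  set_eq (setM (rclosure G1) (center full)) (setM R1 (center full)) /\
  set_eq (setM (rclosure G2) (center full)) (setM R2 (center full)).

End GroupDefs.

Arguments full {T} _.
Arguments trivial {T} _.
Arguments set_eq {T} _ _.
Arguments subset {T} _ _.
Arguments setI {T} _ _ _.
Arguments setM {T} _ _ _.
Arguments subgroup {T} _.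
Arguments gen {T} _ _.
Arguments gpow {T} _ _.
Arguments commg {T} _ _.
Arguments commgroup {T} _ _ _.
Arguments lcs {T} _ _ _.
Arguments nilpotent {T} _.
Arguments torsion_free {T} _.
Arguments finitely_generated {T} _.
Arguments center {T} _ _.
Arguments dprod {T} _ _ _.
Arguments rational_closure_of {T} _.
Arguments rclosure {T} _ _.
Arguments rational {T} _.
Arguments matches {T} _ _ _ _.

(* The commuting of H1 and H2 is inherited from that of R1 Z and R2 Z,
   since H_i lies in X_i, hence in R_i Z(Gbar).  Their intersection is
   central in both, so it lies in Z(H1) and Z(H2), which meet trivially.
   Finally G = G1 G2 with G_i inside X_i = H_i Z(G), and the central factor
   Z(G) = Z(H1) Z(H2) can be redistributed between H1 and H2. *)
From Stdlib Require Import List Arith.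

Section CommutingSubsets.
Context {T : group}.
Implicit Types (x y a b c d z : T) (A B G : gset T).

Definition commute x y : Prop := gmul x y = gmul y x.

Definition commuting A B : Prop := forall a b, A a -> B b -> commute a b.

Lemma commute_sym x y : commute x y -> commute y x.
Proof. unfold commute; auto. Qed.

Lemma commute_mull a b c : commute a c -> commute b c -> commute (gmul a b) c.
Proof.
  unfold commute; intros Hac Hbc.
  rewrite <- gmulA, Hbc, gmulA, Hac, <- gmulA; reflexivity.
Qed.

Lemma commute_mulr a c d : commute a c -> commute a d -> commute a (gmul c d).
Proof. intros; apply commute_sym, commute_mull; apply commute_sym; auto. Qed.

Lemma mul_swap_middle a b c d :
  commute b c -> gmul (gmul a b) (gmul c d) = gmul (gmul a c) (gmul b d).
Proof.
  intros Hbc; rewrite <- !gmulA; f_equal; rewrite !gmulA; f_equal; exact Hbc.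
Qed.

Lemma commuting_sub {A B A' B' : gset T} :
  commuting A B -> subset A' A -> subset B' B -> commuting A' B'.
Proof. intros HAB HA HB a b Ha Hb; apply HAB; auto. Qed.

Lemma setM_unit_r A B x : B gone -> A x -> setM A B x.
Proof. intros HB HA; exists x, gone; rewrite gmul1r; auto. Qed.

Lemma center_one G : G gone -> center G gone.
Proof.
  intros G1; split; [exact G1 | intros; rewrite gmul1l, gmul1r; reflexivity].
Qed.

Lemma center_mul {G} {z1 z2 : T} :
  subgroup G -> center G z1 -> center G z2 -> center G (gmul z1 z2).
Proof.
  intros [_ [mulG _]] [Gz1 Cz1] [Gz2 Cz2]; split; [auto|].
  intros y Gy; apply commute_mull; [apply Cz1 | apply Cz2]; exact Gy.
Qed.

Lemma rclosure_self A x : A x -> rclosure A x.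
Proof. intros Ax; exists 1; split; [auto | simpl; rewrite gmul1r; exact Ax]. Qed.

Lemma commuting_setM_center {R1 R2 : gset T} :
  commuting R1 R2 ->
  commuting (setM R1 (center full)) (setM R2 (center full)).
Proof.
  intros CR x y [r1 [z1 [Hr1 [[_ Cz1] ->]]]] [r2 [z2 [Hr2 [[_ Cz2] ->]]]].
  assert (Z1 : forall u, commute z1 u) by (intro; apply Cz1; exact I).
  assert (Z2 : forall u, commute u z2)
    by (intro; apply commute_sym, Cz2; exact I).
  apply commute_mull; apply commute_mulr; auto.
Qed.

Lemma dprod_subset_l {G} {G1 G2 : gset T} : dprod G G1 G2 -> subset G1 G.
Proof.
  intros [_ [[one2 _] [_ [_ EG]]]] x Hx; apply EG, setM_unit_r; auto.
Qed.

Lemma matches_subset_l {R1 R2 G1 G2 : gset T} :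
  matches R1 R2 G1 G2 -> subset G1 (setM R1 (center full)).
Proof.
  intros [M1 _] x Hx; apply M1, setM_unit_r; [apply center_one; exact I|].
  apply rclosure_self; exact Hx.
Qed.

Lemma matches_sym {R1 R2 G1 G2 : gset T} :
  matches R1 R2 G1 G2 -> matches R2 R1 G2 G1.
Proof. intros [M1 M2]; split; assumption. Qed.

Lemma dprod_sym {G} {G1 G2 : gset T} : dprod G G1 G2 -> dprod G G2 G1.
Proof.
  intros [S1 [S2 [C [I E]]]].
  split; [exact S2 | split; [exact S1 | split; [| split]]]; intro x.
  - intros y Hx Hy; symmetry; apply C; auto.
  - split.
    + intros [Hx2 Hx1]; apply I; split; auto.
    + intros Hx; apply I in Hx; destruct Hx; split; auto.
  - split.
    + intros Hx; destruct (proj1 (E x) Hx) as [a [b [Ha [Hb ->]]]].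
      exists b, a; repeat split; auto; apply C; auto.
    + intros [b [a [Hb [Ha ->]]]]; apply E; exists a, b; repeat split; auto.
      symmetry; apply C; auto.
Qed.

Section CommutingFactors.
Context {H1 H2 : gset T}.
Hypotheses (S1 : subgroup H1) (S2 : subgroup H2) (C12 : commuting H1 H2).

Lemma setI_trivial_of_center :
  set_eq (setI (center H1) (center H2)) trivial -> set_eq (setI H1 H2) trivial.
Proof.
  intros IZ x; split.
  - intros [Hx1 Hx2]; apply IZ; split; split; auto.
    + intros y Hy; apply commute_sym, C12; auto.
    + intros y Hy; apply C12; auto.
  - intros ->; split; [apply S1 | apply S2].
Qed.

Lemma setM_center_mul {G} {x y} :
  subgroup G -> subset H2 G ->
  subset (center G) (setM (center H1) (center H2)) ->
  setM H1 (center G) x -> setM H2 (center G) y -> setM H1 H2 (gmul x y).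
Proof.
  intros SG sub2 EZ [h1 [z1 [Hh1 [Zz1 ->]]]] [h2 [z2 [Hh2 [Zz2 ->]]]].
  destruct (EZ _ (center_mul SG Zz1 Zz2)) as [a [b [[Ha _] [[Hb _] Eab]]]].
  exists (gmul h1 a), (gmul h2 b).
  split; [apply S1; auto|]; split; [apply S2; auto|].
  rewrite mul_swap_middle by (apply (proj2 Zz1), sub2; exact Hh2).
  rewrite Eab; apply mul_swap_middle, commute_sym, C12; auto.
Qed.

End CommutingFactors.

End CommutingSubsets.

Theorem mainTheorem13 (Gbar : group) (G G1 G2 R1 R2 H1 H2 : gset Gbar) :
  finitely_generated G -> torsion_free G -> nilpotent G ->
  rational_closure_of G ->
  rational R1 -> rational R2 -> dprod full R1 R2 ->
  dprod G G1 G2 ->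
  matches R1 R2 G1 G2 ->
  subgroup H1 -> subset H1 G -> subgroup H2 -> subset H2 G ->
  set_eq (setI (setM R1 (center full)) G) (setM H1 (center G)) ->
  set_eq (setI (setM R2 (center full)) G) (setM H2 (center G)) ->
  dprod (center G) (center H1) (center H2) ->
  dprod G H1 H2.
Proof.
  intros _ _ _ [SG _] _ _ [_ [_ [CR _]]] DG M S1 sub1 S2 sub2 E1 E2
    [_ [_ [_ [IZ EZ]]]].
  pose proof DG as [_ [_ [_ [_ EG]]]].
  assert (ZG1 : center G gone) by (apply center_one, SG).
  assert (C12 : commuting H1 H2).
  { apply (commuting_sub (commuting_setM_center CR));
      intros h Hh; [apply E1 | apply E2]; apply setM_unit_r; auto. }
  assert (X1 : subset G1 (setM H1 (center G))).
  { intros g Hg; apply E1; split;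
      [apply (matches_subset_l M) | apply (dprod_subset_l DG)]; exact Hg. }
  assert (X2 : subset G2 (setM H2 (center G))).
  { intros g Hg; apply E2; split;
      [apply (matches_subset_l (matches_sym M))
      | apply (dprod_subset_l (dprod_sym DG))]; exact Hg. }
  split; [exact S1 | split; [exact S2 | split; [exact C12 | split]]].
  - apply setI_trivial_of_center; assumption.
  - intro x; split.
    + intros Gx; destruct (proj1 (EG x) Gx) as [g1 [g2 [Hg1 [Hg2 ->]]]].
      apply (setM_center_mul S1 S2 C12 SG sub2); auto.
      intros z Hz; apply EZ, Hz.
    + intros [a [b [Ha [Hb ->]]]]; apply SG; auto.
Qed.
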